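(* Let $(J,\mathcal F)$, coefficients $b^S,w^S_j$, and $P(\mathcal F)$ be as in the context, with $P(\mathcal F)$ an $\mathcal F$-extended polymatroid. Let $\mathbf c\in\mathbb R^J$ and let algorithm $\mathrm{AG}_1$ on input $\mathbf c$ output $\boldsymbol\pi=(\pi_1,\dots,\pi_n)$ and $\boldsymbol\nu$; put $S_k=\{\pi_k,\dots,\pi_n\}$. (a) For every $\mathbf x\in\mathbb R^J$, $$\sum_{j\in J}c_jx_j=\nu_{\pi_1}\sum_{j\in S_1}w^{S_1}_jx_j+\sum_{k=2}^n(\nu_{\pi_k}-\nu_{\pi_{k-1}})\sum_{j\in S_k}w^{S_k}_jx_j,$$ and $\sum_{j\in J}c_jx^{\boldsymbol\pi}_j=\nu_{\pi_1}b^{S_1}+\sum_{k=2}^n(\nu_{\pi_k}-\nu_{\pi_{k-1}})b^{S_k}$. (b) If $\nu_{\pi_1}\le\nu_{\pi_2}\le\cdots\le\nu_{\pi_n}$, then $\mathbf x^{\boldsymbol\pi}$ and $\mathbf y^{\boldsymbol\pi}$ form an optimal primal-dual pair for the LP $\min\{\sum_jc_jx_j:\mathbf x\in P(\mathcal F)\}$ and its dual, and the optimal value is $\nu_{\pi_1}b^{S_1}+\sum_{k=2}^n(\nu_{\pi_k}-\nu_{\pi_{k-1}})b^{S_k}$.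
   Context: $J$ is a finite set, $|J|=n$; $\mathcal F\subseteq2^J$ with $\emptyset\in\mathcal F$, every nonempty $S\in\mathcal F$ having nonempty inner boundary $\partial^-S=\{j\in S:S\setminus\{j\}\in\mathcal F\}$, and every $S\in\mathcal F$, $S\ne J$, having some $j\in J\setminus S$ with $S\cup\{j\}\in\mathcal F$. A full $\mathcal F$-string is an ordering $\boldsymbol\pi=(\pi_1,\dots,\pi_n)$ of $J$ with $\{\pi_k,\dots,\pi_n\}\in\mathcal F$ for all $k$; $\Pi(\mathcal F)$ is the set of these. Given $b^S\ge0$ and $w^S_j>0$ for $j\in S\in\mathcal F$, $P(\mathcal F)=\{\mathbf x\in\mathbb R^J: \sum_{j\in S}w^S_jx_j\ge b^S\ (S\in\mathcal F\setminus\{J\}),\ \sum_{j\in J}w^J_jx_j=b^J,\ \mathbf x\ge0\}$. For $\boldsymbol\pi\in\Pi(\mathcal F)$, $\mathbf x^{\boldsymbol\pi}$ is the unique solution of $\sum_{l=k}^nw^{S_k}_{\pi_l}x_{\pi_l}=b^{S_k}$, $1\le k\le n$, where $S_k=\{\pi_k,\dots,\pi_n\}$. $P(\mathcal F)$ is an $\mathcal F$-extended polymatroid if $\mathbf x^{\boldsymbol\pi}\in P(\mathcal F)$ for all $\boldsymbol\pi\in\Pi(\mathcal F)$. The dual LP is $\max\{\sum_{S\in\mathcal F}b^Sy^S:\sum_{S:j\in S\in\mathcal F}w^S_jy^S\le c_j\ (j\in J),\ y^S\ge0\ (S\ne J),\ y^J\text{ free}\}$. Algorithm $\mathrm{AG}_1$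 on input $\mathbf c$: $S_1=J$, $y^{S_1}=\min\{c_j/w^{S_1}_j:j\in\partial^-S_1\}$, $\pi_1$ a minimizer, $\nu_{\pi_1}=y^{S_1}$; for $k=2,\dots,n$: $S_k=S_{k-1}\setminus\{\pi_{k-1}\}$, $y^{S_k}=\min\{(c_j-\sum_{l=1}^{k-1}y^{S_l}w^{S_l}_j)/w^{S_k}_j:j\in\partial^-S_k\}$, $\pi_k$ a minimizer, $\nu_{\pi_k}=\nu_{\pi_{k-1}}+y^{S_k}$. Define $\mathbf y^{\boldsymbol\pi}=(y^{\boldsymbol\pi,S})_{S\in\mathcal F}$ by $y^{\boldsymbol\pi,S_1}=\nu_{\pi_1}$, $y^{\boldsymbol\pi,S_k}=\nu_{\pi_k}-\nu_{\pi_{k-1}}$ for $2\le k\le n$, and $y^{\boldsymbol\pi,S}=0$ for all other $S\in\mathcal F$. *)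

From mathcomp Require Import all_boot all_order all_algebra.
Set Implicit Arguments. Unset Strict Implicit. Unset Printing Implicit Defensive.
Import Order.TTheory GRing.Theory Num.Theory.
Local Open Scope ring_scope.

Section Defs.
Variables (R : realFieldType) (J : finType).

Definition inner_boundary (F : {set {set J}}) (S : {set J}) : {set J} :=
  [set j in S | S :\ j \in F].

Definition good_family (F : {set {set J}}) : Prop :=
  [/\ set0 \in F,
      (forall S, S \in F -> S != set0 -> inner_boundary F S != set0) &
      (forall S, S \in F -> S != setT ->
         exists2 j, j \notin S & j |: S \in F)].

Definition good_coeffs (F : {set {set J}}) (b : {set J} -> R)
    (w : {set J} -> J -> R) : Prop :=
  forall S, S \in F -> 0 <= b S /\ (forall j, j \in S -> 0 < w S j).

(* An ordering pi_1, ..., pi_n of J is encoded (0-based) as pi : nat -> J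
   such that pi 0, ..., pi (n-1) enumerate J (values beyond n are irrelevant). *)
Definition is_ordering (pi : nat -> J) : Prop :=
  [set pi (val i) | i : 'I_#|J|] = [set: J].

(* S_k = {pi_k, ..., pi_n} (0-based: {pi k, ..., pi (n-1)}). *)
Definition Sk (pi : nat -> J) (k : nat) : {set J} :=
  [set pi (val i) | i : 'I_#|J| & (k <= val i)%N].

Definition full_string (F : {set {set J}}) (pi : nat -> J) : Prop :=
  is_ordering pi /\ forall k, (k < #|J|)%N -> Sk pi k \in F.

Definition inP (F : {set {set J}}) (b : {set J} -> R) (w : {set J} -> J -> R)
    (x : J -> R) : Prop :=
  [/\ (forall S, S \in F -> S != setT -> b S <= \sum_(j in S) w S j * x j),
      \sum_(j in [set: J]) w setT j * x j = b setT &
      (forall j, 0 <= x j)].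

(* x solves the triangular system defining x^pi (it has a unique solution). *)
Definition is_xpi (b : {set J} -> R) (w : {set J} -> J -> R)
    (pi : nat -> J) (x : J -> R) : Prop :=
  forall k, (k < #|J|)%N -> \sum_(j in Sk pi k) w (Sk pi k) j * x j = b (Sk pi k).

Definition ext_polymatroid (F : {set {set J}}) (b : {set J} -> R)
    (w : {set J} -> J -> R) : Prop :=
  forall pi, full_string F pi -> forall x, is_xpi b w pi x -> inP F b w x.

(* Step value y^{S_k}: nu_{pi_1} for the first step, nu_{pi_k} - nu_{pi_{k-1}}
   otherwise (0-based k). *)
Definition ystep (pi : nat -> J) (nu : J -> R) (k : nat) : R :=
  if k is k'.+1 then nu (pi k) - nu (pi k') else nu (pi 0%N).

Definition AG1 (F : {set {set J}}) (w : {set J} -> J -> R) (c : J -> R)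
    (pi : nat -> J) (nu : J -> R) : Prop :=
  is_ordering pi /\
  forall k, (k < #|J|)%N ->
    let S := Sk pi k in
    let r := fun j => (c j - \sum_(l < k) ystep pi nu l * w (Sk pi l) j) / w S j in
    [/\ pi k \in inner_boundary F S,
        ystep pi nu k = r (pi k) &
        (forall j, j \in inner_boundary F S -> ystep pi nu k <= r j)].

Definition ypi (pi : nat -> J) (nu : J -> R) (S : {set J}) : R :=
  \sum_(k < #|J| | Sk pi k == S) ystep pi nu k.

Definition primal_obj (c x : J -> R) : R := \sum_(j in [set: J]) c j * x j.

Definition primal_optimal F b w (c x : J -> R) : Prop :=
  inP F b w x /\ forall x', inP F b w x' -> primal_obj c x <= primal_obj c x'.

Definition dual_feasible (F : {set {set J}}) (w : {set J} -> J -> R)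
    (c : J -> R) (y : {set J} -> R) : Prop :=
  (forall j, \sum_(S in F | j \in S) w S j * y S <= c j) /\
  (forall S, S \in F -> S != setT -> 0 <= y S).

Definition dual_obj (F : {set {set J}}) (b : {set J} -> R) (y : {set J} -> R) : R :=
  \sum_(S in F) b S * y S.

Definition dual_optimal F b w c (y : {set J} -> R) : Prop :=
  dual_feasible F w c y /\
  forall y', dual_feasible F w c y' -> dual_obj F b y' <= dual_obj F b y.

End Defs.

From mathcomp Require Import all_boot all_order all_algebra.
Import Order.TTheory GRing.Theory Num.Theory.
Local Open Scope ring_scope.

(* AG_1 picks each step y^{S_k} so that the dual constraint of pi_k becomes
   tight when pi_k leaves the string; hence c_j = sum_{S ∋ j} w^S_j y^S for
   every j, which is the decomposition (a) of the cost.  If nu is nondecreasing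
   along pi, every y^S with S <> J is nonnegative, so y^pi is dual feasible, and
   by (a) its dual value is the cost of x^pi, which is primal feasible because
   P(F) is an F-extended polymatroid.  Weak duality then makes both optimal. *)

Section Ordering.
Context {J : finType} { pi : nat -> J }.
Hypothesis pi_ord : is_ordering pi.

Lemma ordering_inj : injective (fun i : 'I_#|J| => pi i).
Proof.
have : #|[set pi (val i) | i : 'I_#|J|]| == #|'I_#|J| |.
  by rewrite pi_ord cardsT card_ord.
by move/imset_injP => inj_pi i j /inj_pi; apply.
Qed.

Lemma ordering_surj (j : J) : exists i : 'I_#|J|, j = pi i.
Proof.
have : j \in [set: J] by rewrite inE.
by rewrite -pi_ord => /imsetP [i _ ->]; exists i.
Qed.

Lemma mem_Sk k (i : 'I_#|J|) : (pi i \in Sk pi k) = (k <= i)%N.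
Proof.
apply/imsetP/idP => [[i' ki' /ordering_inj ->]|ki]; first by rewrite inE in ki'.
by exists i; rewrite ?inE.
Qed.

Lemma big_Sk (M : nmodType) (G : J -> M) k :
  \sum_(j in Sk pi k) G j = \sum_(i < #|J| | (k <= i)%N) G (pi i).
Proof.
rewrite big_imset /=; last by move=> i j _ _; apply: ordering_inj.
by apply: eq_bigl => i; rewrite inE.
Qed.

Lemma big_setT_ordering (M : nmodType) (G : J -> M) :
  \sum_(j in [set: J]) G j = \sum_(i < #|J|) G (pi i).
Proof.
rewrite -{1}pi_ord big_imset /=; last by move=> i j _ _; apply: ordering_inj.
by apply: eq_bigl => i; rewrite inE.
Qed.

Lemma Sk0 : Sk pi 0 = setT.
Proof.
by apply/setP => j; have [i ->] := ordering_surj j; rewrite mem_Sk inE.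
Qed.

Lemma SkS k : (k < #|J|)%N -> Sk pi k :\ pi k = Sk pi k.+1.
Proof.
move=> lt_k; apply/setP => j; have [i ->] := ordering_surj j.
rewrite !inE !mem_Sk.
have -> : (pi i == pi k) = (i == Ordinal lt_k).
  by apply/eqP/eqP => [/(@ordering_inj i (Ordinal lt_k))|->].
by rewrite -val_eqE /= [(k < i)%N]ltn_neqAle eq_sym.
Qed.

End Ordering.

Lemma setT_in_good_family (J : finType) (F : {set {set J}}) :
  good_family F -> setT \in F.
Proof.
case=> F0 _ F_ext.
have [S SF S_max] := @arg_maxnP _ set0 (fun S => S \in F) (fun S => #|S|) F0.
apply: contraT => FT; have SnT : S != setT by apply: contraNneq FT => <-.
have [j jS jSF] := F_ext S SF SnT.
have := S_max _ jSF; rewrite cardsU1 jS add1n => lt_SS.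
by have : (#|S| < #|S|)%N := lt_SS; rewrite ltnn.
Qed.

Lemma big_ypi {R : realFieldType} {J : finType} {F : {set {set J}}}
    { pi : nat -> J } {nu : J -> R} (G : {set J} -> R) (P : pred {set J}) :
  (forall k, (k < #|J|)%N -> Sk pi k \in F) ->
  \sum_(S in F | P S) G S * ypi pi nu S =
  \sum_(k < #|J| | P (Sk pi k)) G (Sk pi k) * ystep pi nu k.
Proof.
move=> SkF; under eq_bigr => S _ do rewrite /ypi big_distrr big_mkcond /=.
rewrite exchange_big /= [RHS]big_mkcond /=; apply: eq_bigr => k _.
rewrite big_mkcond /= (bigD1 (Sk pi k)) //= eqxx SkF //= big1 ?addr0 // => S.
by rewrite eq_sym => /negbTE ->; case: ifP.
Qed.

Lemma weak_duality {R : realFieldType} {J : finType} {F : {set {set J}}}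
    {b : {set J} -> R} {w : {set J} -> J -> R} {c x : J -> R}
    {y : {set J} -> R} :
  inP F b w x -> dual_feasible F w c y -> dual_obj F b y <= primal_obj c x.
Proof.
move=> [x_ge x_eqT x_ge0] [y_le y_ge0].
rewrite /primal_obj (eq_bigl xpredT); last by move=> j; rewrite inE.
apply: (@le_trans _ _ (\sum_(S in F) y S * \sum_(j in S) w S j * x j)).
  apply: ler_sum => S SF; rewrite mulrC.
  have [->|SnT] := eqVneq S setT; first by rewrite x_eqT.
  by rewrite ler_wpM2l ?y_ge0 ?x_ge.
under [X in X <= _]eq_bigr => S _ do rewrite big_distrr big_mkcond /=.
rewrite exchange_big /=; apply: ler_sum => j _.
rewrite -big_mkcondr /= (eq_bigr (fun S => x j * (w S j * y S))); last first.
  by move=> S _; rewrite mulrC -mulrA mulrCA.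
by rewrite -big_distrr /= [c j * _]mulrC ler_wpM2l ?x_ge0 ?y_le.
Qed.

Section AG1Output.
Context {R : realFieldType} {J : finType} {F : {set {set J}}}.
Context {b : {set J} -> R} {w : {set J} -> J -> R} {c : J -> R}.
Context { pi : nat -> J } {nu : J -> R}.
Hypothesis F_good : good_family F.
Hypothesis w_pos : forall S, S \in F -> forall j, j \in S -> 0 < w S j.
Hypothesis pi_nu_AG1 : AG1 F w c pi nu.

Let pi_ord : is_ordering pi := pi_nu_AG1.1.

Lemma AG1_Sk_in k : (k < #|J|)%N -> Sk pi k \in F.
Proof.
case: k => [|k] lt_k; first by rewrite Sk0 // setT_in_good_family.
have [piF _ _] := pi_nu_AG1.2 k (ltnW lt_k).
by move: piF; rewrite inE (SkS pi_ord k (ltnW lt_k)) => /andP [].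
Qed.

Lemma AG1_costE (m : 'I_#|J|) :
  c (pi m) = \sum_(k < #|J| | (k <= m)%N) ystep pi nu k * w (Sk pi k) (pi m).
Proof.
have [_ y_m _] := pi_nu_AG1.2 m (ltn_ord m).
have w_m : w (Sk pi m) (pi m) != 0.
  by rewrite gt_eqF // w_pos ?AG1_Sk_in ?mem_Sk.
rewrite -(big_ord_widen _ (fun k => ystep pi nu k * w (Sk pi k) (pi m)) (ltn_ord m)).
by rewrite big_ord_recr /= y_m divfK // addrC subrK.
Qed.

Lemma AG1_obj_decomp (x : J -> R) :
  \sum_(j in [set: J]) c j * x j =
  \sum_(k < #|J|) ystep pi nu k * \sum_(j in Sk pi k) w (Sk pi k) j * x j.
Proof.
rewrite (big_setT_ordering pi_ord).
under eq_bigr => m _ do rewrite AG1_costE big_distrl big_mkcond /=.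
under [RHS]eq_bigr => k _ do rewrite (big_Sk pi_ord) big_distrr big_mkcond /=.
rewrite exchange_big /=; apply: eq_bigr => m _; apply: eq_bigr => k _.
by case: ifP => // _; rewrite mulrA.
Qed.

Lemma AG1_obj_xpi (x : J -> R) : is_xpi b w pi x ->
  \sum_(j in [set: J]) c j * x j = \sum_(k < #|J|) ystep pi nu k * b (Sk pi k).
Proof.
by move=> x_pi; rewrite AG1_obj_decomp; apply: eq_bigr => k _; rewrite x_pi.
Qed.

Lemma dual_obj_ypi :
  dual_obj F b (ypi pi nu) = \sum_(k < #|J|) ystep pi nu k * b (Sk pi k).
Proof.
rewrite /dual_obj -(eq_bigl _ _ (fun S => andbT (S \in F))).
rewrite (big_ypi _ xpredT AG1_Sk_in).
by apply: eq_bigr => k _; rewrite mulrC.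
Qed.

Lemma ypi_tight (j : J) : \sum_(S in F | j \in S) w S j * ypi pi nu S = c j.
Proof.
have [m ->] := ordering_surj pi_ord j.
rewrite (big_ypi (fun S => w S (pi m)) (fun S => pi m \in S) AG1_Sk_in) AG1_costE.
by apply: eq_big => [k|k _]; rewrite ?mem_Sk // mulrC.
Qed.

Lemma ypi_dual_feasible :
  (forall k, (k.+1 < #|J|)%N -> nu (pi k) <= nu (pi k.+1)) ->
  dual_feasible F w c (ypi pi nu).
Proof.
move=> nu_mono; split=> [j|S _ SnT]; first by rewrite ypi_tight.
apply: sumr_ge0 => -[[|k] lt_k] /= /eqP Sk_S; last by rewrite subr_ge0 nu_mono.
by move: SnT; rewrite -Sk_S Sk0 ?eqxx.
Qed.

End AG1Output.

Theorem theorem1 (R : realFieldType) (J : finType) (F : {set {set J}})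
    (b : {set J} -> R) (w : {set J} -> J -> R) (c : J -> R)
    (pi : nat -> J) (nu : J -> R) :
  good_family F -> good_coeffs F b w -> ext_polymatroid F b w ->
  AG1 F w c pi nu ->
  (* (a) *)
  ((forall x : J -> R,
      \sum_(j in [set: J]) c j * x j =
      \sum_(k < #|J|) ystep pi nu k * \sum_(j in Sk pi k) w (Sk pi k) j * x j) /\
   (forall x : J -> R, is_xpi b w pi x ->
      \sum_(j in [set: J]) c j * x j =
      \sum_(k < #|J|) ystep pi nu k * b (Sk pi k))) /\
  (* (b) *)
  ((forall k, (k.+1 < #|J|)%N -> nu (pi k) <= nu (pi k.+1)) ->
   forall x : J -> R, is_xpi b w pi x ->
     [/\ primal_optimal F b w c x,
         dual_optimal F b w c (ypi pi nu),
         primal_obj c x = dual_obj F b (ypi pi nu) &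
         primal_obj c x = \sum_(k < #|J|) ystep pi nu k * b (Sk pi k)]).
Proof.
move=> F_good coeffs_good F_polymatroid pi_nu_AG1.
have w_pos S (SF : S \in F) : forall j, j \in S -> 0 < w S j := (coeffs_good S SF).2.
have obj_decomp := AG1_obj_decomp F_good w_pos pi_nu_AG1.
have obj_xpi := AG1_obj_xpi (b := b) F_good w_pos pi_nu_AG1.
split; first by split.
move=> nu_mono x x_pi.
have x_feasible : inP F b w x.
  apply: (F_polymatroid pi) => //.
  by split; [exact: pi_nu_AG1.1 | exact: AG1_Sk_in F_good pi_nu_AG1].
have y_feasible := ypi_dual_feasible F_good w_pos pi_nu_AG1 nu_mono.
have no_gap : primal_obj c x = dual_obj F b (ypi pi nu).
  by rewrite (dual_obj_ypi F_good pi_nu_AG1); exact: obj_xpi.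
split=> //; last exact: obj_xpi.
- by split=> // x' x'_feasible; rewrite no_gap (weak_duality x'_feasible y_feasible).
- by split=> // y' y'_feasible; rewrite -no_gap (weak_duality x_feasible y'_feasible).
Qed.
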